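(* Assume (S) and let $A_h:U_h\to U_h$ be defined by $\int_{\mathcal O}(A_h\phi_h)\psi_h=\int_{\mathcal O}\nabla\phi_h\cdot\nabla\psi_h$ for all $\psi_h\in U_h$. Then there is a constant $C$ independent of $h$ such that $\|A_h\phi_h\|_{L^2(\mathcal O)}\le C\|\Delta_h\phi_h\|_{L^2(\mathcal O)}$ for all $\phi_h\in U_h$.
   Context: Let $L_x,L_y>0$, $\mathcal O=(0,L_x)\times(0,L_y)$; all functions are $\mathcal O$-periodic. For $h\in(0,1)$ let $h_x=L_x/N_x$, $h_y=L_y/N_y$ with $\hat c_1h\le h_x,h_y\le\hat C_2h$ (Assumption (S)). Nodes are $x_i=(i-1)h_x$ and $y_j=(j-1)h_y$. $U_h$ is the space of continuous periodic functions on $\overline{\mathcal O}$ that are bilinear on each grid rectangle. $\mathcal I_h^x$ and $\mathcal I_h^y$ are nodal piecewise-linear interpolation in $x$ and in $y$ (each acting in its own variable for fixed value of the other), and $\mathcal I_h^{xy}=\mathcal I_h^x\mathcal I_h^y$. The discrete Laplacian $\Delta_h:U_h\to U_h$ is defined by $-\int_{\mathcal O}\mathcal I_h^{xy}(\Delta_h\phi_h\psi_h)=\int_{\mathcal O}\mathcal I_h^y(\partial_x\phi_h\partial_x\psi_h)+\mathcal I_h^x(\partial_y\phi_h\partial_y\psi_h)$ for all $\psi_h\in U_h$. Equivalently, $\Delta_h\phi_h(x,y)=\frac{\phi_h(x+h_x,y)-2\phi_h(x,y)+\phi_h(x-h_x,y)}{h_x^2}+\frac{\phi_h(x,y+h_y)-2\phi_h(x,y)+\phi_h(x,y-h_y)}{h_y^2}$.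 *)

From Stdlib Require Import Reals Lra.
From Coquelicot Require Import Coquelicot.
Open Scope R_scope.

Definition hx (Lx : R) (Nx : nat) : R := Lx / INR Nx.
Definition hy (Ly : R) (Ny : nat) : R := Ly / INR Ny.

(* U_h : continuous, O-periodic functions that are bilinear on each grid
   rectangle [i hx,(i+1) hx] x [j hy,(j+1) hy] (0 <= i < Nx, 0 <= j < Ny);
   with periodicity these rectangles tile the plane. *)
Definition in_Uh (Lx Ly : R) (Nx Ny : nat) (f : R -> R -> R) : Prop :=
  (forall x y, f (x + Lx) y = f x y) /\
  (forall x y, f x (y + Ly) = f x y) /\
  (forall p : R * R, continuous (fun q : R * R => f (fst q) (snd q)) p) /\
  (forall i j : nat, (i < Nx)%nat -> (j < Ny)%nat ->
     exists a b c d : R, forall x y,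
       INR i * hx Lx Nx <= x <= INR (S i) * hx Lx Nx ->
       INR j * hy Ly Ny <= y <= INR (S j) * hy Ly Ny ->
       f x y = a + b * x + c * y + d * x * y).

Definition integO (Lx Ly : R) (f : R -> R -> R) : R :=
  RInt (fun y => RInt (fun x => f x y) 0 Lx) 0 Ly.

Definition L2normO (Lx Ly : R) (f : R -> R -> R) : R :=
  sqrt (integO Lx Ly (fun x y => f x y ^ 2)).

Definition dX (f : R -> R -> R) (x y : R) : R := Derive (fun t => f t y) x.
Definition dY (f : R -> R -> R) (x y : R) : R := Derive (fun t => f x t) y.

Definition lap_h (Lx Ly : R) (Nx Ny : nat) (f : R -> R -> R) (x y : R) : R :=
  (f (x + hx Lx Nx) y - 2 * f x y + f (x - hx Lx Nx) y) / (hx Lx Nx) ^ 2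
  + (f x (y + hy Ly Ny) - 2 * f x y + f x (y - hy Ly Ny)) / (hy Ly Ny) ^ 2.

Definition is_Ah (Lx Ly : R) (Nx Ny : nat) (phi a : R -> R -> R) : Prop :=
  in_Uh Lx Ly Nx Ny a /\
  forall psi, in_Uh Lx Ly Nx Ny psi ->
    integO Lx Ly (fun x y => a x y * psi x y) =
    integO Lx Ly (fun x y => dX phi x y * dX psi x y + dY phi x y * dY psi x y).

From Stdlib Require Import Reals Lra Lia ZArith.
From Coquelicot Require Import Coquelicot.
Open Scope R_scope.

(* Every integral involved is that of a cellwise biquadratic function, so the
   tensor Simpson rule computes it exactly and turns it into a sum over the cells
   of a quadratic form in nodal values: with P, A the nodal values of phi and
   a = A_h phi,
     ||a||^2 = hx hy M(A),      ||Delta_h phi||^2 = hx hy M(Lap P),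
     (grad phi, grad a) = hx hy (E_y(D_x P, D_x A) + E_x(D_y P, D_y A)),
   where M is the element mass form, E_y / E_x are edge mass forms and Lap is the
   grid Laplacian. Testing the definition of A_h with a itself gives M(A) = the
   gradient pairing; summation by parts, a weighted Cauchy-Schwarz inequality, the
   comparison of edge, nodal and element mass forms, and the nonnegativity of the
   period sum of (D_xx P)(D_yy P) then give M(A) <= 54 M(Lap P). *)

Fixpoint sumN (n : nat) (f : nat -> R) : R :=
  match n with O => 0 | S k => sumN k f + f k end.

Lemma sumN_ext n f g : (forall k, (k < n)%nat -> f k = g k) -> sumN n f = sumN n g.
Proof.
  induction n as [|n IH]; simpl; intros E; [reflexivity|].
  rewrite IH by (intros k Hk; apply E; lia). rewrite E by lia. reflexivity.
Qed.

Lemma sumN_plus n f g : sumN n (fun k => f k + g k) = sumN n f + sumN n g.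
Proof. induction n as [|n IH]; simpl; [ring|rewrite IH; ring]. Qed.

Lemma sumN_scal n c f : sumN n (fun k => c * f k) = c * sumN n f.
Proof. induction n as [|n IH]; simpl; [ring|rewrite IH; ring]. Qed.

Lemma sumN_le n f g : (forall k, (k < n)%nat -> f k <= g k) -> sumN n f <= sumN n g.
Proof.
  induction n as [|n IH]; simpl; intros Hle; [lra|].
  assert (sumN n f <= sumN n g) by (apply IH; intros; apply Hle; lia).
  assert (f n <= g n) by (apply Hle; lia). lra.
Qed.

Lemma sumN_shift (g : Z -> R) n :
  sumN n (fun k => g (Z.of_nat k + 1)%Z) = sumN n (fun k => g (Z.of_nat k)) - g 0%Z + g (Z.of_nat n).
Proof.
  induction n as [|n IH]; simpl; [ring|].
  rewrite IH, Zpos_P_of_succ_nat. unfold Z.succ. ring.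
Qed.

Definition quad (Q : R -> R) : Prop :=
  exists c0 c1 c2 : R, forall s, Q s = c0 + c1 * s + c2 * s ^ 2.

Lemma quad_ext (Q1 Q2 : R -> R) : (forall s, Q1 s = Q2 s) -> quad Q1 -> quad Q2.
Proof. intros E [c0 [c1 [c2 HQ]]]. exists c0, c1, c2. intros s. rewrite <- E. apply HQ. Qed.

Lemma quad_plus (Q1 Q2 : R -> R) : quad Q1 -> quad Q2 -> quad (fun s => Q1 s + Q2 s).
Proof.
  intros [a0 [a1 [a2 H1]]] [b0 [b1 [b2 H2]]].
  exists (a0 + b0), (a1 + b1), (a2 + b2). intros s. rewrite H1, H2. ring.
Qed.

Lemma quad_scal (c : R) (Q : R -> R) : quad Q -> quad (fun s => c * Q s).
Proof. intros [a0 [a1 [a2 HQ]]]. exists (c * a0), (c * a1), (c * a2). intros s. rewrite HQ. ring. Qed.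

Lemma quad_sumN n (Q : nat -> R -> R) :
  (forall k, quad (Q k)) -> quad (fun s => sumN n (fun k => Q k s)).
Proof.
  intros HQ. induction n as [|n IH]; simpl.
  - exists 0, 0, 0. intros s. ring.
  - apply quad_plus; auto.
Qed.

Lemma quad_mul_affine (a b c d : R) : quad (fun s => (a + b * s) * (c + d * s)).
Proof. exists (a * c), (a * d + b * c), (b * d). intros s. ring. Qed.

(* Simpson's rule on the reference interval [0,1], without the factor 1/6. *)
Definition simpson (Q : R -> R) : R := Q 0 + 4 * Q (1 / 2) + Q 1.

Lemma quad_simpson (P : R -> R -> R) :
  (forall s, quad (fun t => P s t)) -> quad (fun t => simpson (fun s => P s t)).
Proof.
  intros HP. unfold simpson.
  apply quad_plus; [apply quad_plus; [|apply quad_scal]|]; apply HP.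
Qed.

Lemma simpson_sumN n (Q : nat -> R -> R) :
  simpson (fun s => sumN n (fun k => Q k s)) = sumN n (fun k => simpson (Q k)).
Proof.
  unfold simpson. induction n as [|n IH]; simpl; [ring|]. rewrite <- IH. ring.
Qed.

Lemma simpson_exact (g Q : R -> R) (x0 h : R) :
  0 < h -> quad Q -> (forall x, x0 < x < x0 + h -> g x = Q ((x - x0) / h)) ->
  is_RInt g x0 (x0 + h) (h / 6 * simpson Q).
Proof.
  intros Hh [c0 [c1 [c2 HQ]]] Hg.
  set (F := fun x => h * (c0 * ((x - x0) / h) + c1 * ((x - x0) / h) ^ 2 / 2
                          + c2 * ((x - x0) / h) ^ 3 / 3)).
  apply (is_RInt_ext (fun x => Q ((x - x0) / h))).
  { intros x Hx. rewrite Rmin_left, Rmax_right in Hx by lra. symmetry. apply Hg. lra. }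
  replace (h / 6 * simpson Q) with (minus (F (x0 + h)) (F x0)).
  2:{ unfold simpson, F, minus, plus, opp. simpl. rewrite !HQ. field. lra. }
  apply (is_RInt_derive F).
  - intros x _. rewrite HQ. unfold F. auto_derive; [auto|]. field. lra.
  - intros x _. apply (continuous_ext (fun x => c0 + c1 * ((x - x0) / h) + c2 * ((x - x0) / h) ^ 2)).
    { intros t. symmetry. apply HQ. }
    apply (ex_derive_continuous (fun x => c0 + c1 * ((x - x0) / h) + c2 * ((x - x0) / h) ^ 2)).
    auto_derive. auto.
Qed.

(* The composite rule on [0, n h]: exact for functions that are cellwise quadratic
   in the local coordinate (the values at the grid points do not matter). *)
Lemma composite_simpson (g : R -> R) (Q : nat -> R -> R) (h : R) (n : nat) :
  0 < h -> (forall k, quad (Q k)) ->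
  (forall k x, (k < n)%nat -> INR k * h < x < INR (S k) * h -> g x = Q k ((x - INR k * h) / h)) ->
  is_RInt g 0 (INR n * h) (sumN n (fun k => h / 6 * simpson (Q k))).
Proof.
  intros Hh HQ. induction n as [|n IH]; intros Hg; cbn [sumN].
  - change (INR 0) with 0. rewrite Rmult_0_l. exact (is_RInt_point g 0).
  - apply (is_RInt_Chasles g 0 (INR n * h)).
    + apply IH. intros k x Hk. apply Hg. lia.
    + replace (INR (S n) * h) with (INR n * h + h) by (rewrite S_INR; ring).
      apply simpson_exact; auto.
      intros x Hx. apply Hg; [lia|]. rewrite S_INR. lra.
Qed.

(* The tensor Simpson rule on the reference square [0,1]^2, without the factor 1/36. *)
Definition simpson2 (P : R -> R -> R) : R := simpson (fun t => simpson (fun s => P s t)).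

Lemma iterated_simpson (F : R -> R -> R) (P : nat -> nat -> R -> R -> R)
    (dx dy : R) (Nx Ny : nat) :
  0 < dx -> 0 < dy ->
  (forall i j t, quad (fun s => P i j s t)) -> (forall i j s, quad (fun t => P i j s t)) ->
  (forall i j x y, (i < Nx)%nat -> (j < Ny)%nat ->
     INR i * dx < x < INR (S i) * dx -> INR j * dy < y < INR (S j) * dy ->
     F x y = P i j ((x - INR i * dx) / dx) ((y - INR j * dy) / dy)) ->
  RInt (fun y => RInt (fun x => F x y) 0 (INR Nx * dx)) 0 (INR Ny * dy) =
  sumN Ny (fun j => sumN Nx (fun i => dx * dy / 36 * simpson2 (P i j))).
Proof.
  intros Hx Hy Ps Pt HF.
  set (Q := fun j t => sumN Nx (fun i => dx / 6 * simpson (fun s => P i j s t))).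
  assert (Inner : forall j y, (j < Ny)%nat -> INR j * dy < y < INR (S j) * dy ->
            RInt (fun x => F x y) 0 (INR Nx * dx) = Q j ((y - INR j * dy) / dy)).
  { intros j y Hj Hyj. apply is_RInt_unique, composite_simpson; [exact Hx | intros i; apply Ps |].
    intros i x Hi Hxi. apply HF; auto. }
  assert (HQ : forall j, quad (Q j)).
  { intros j. apply quad_sumN. intros i. apply quad_scal, quad_simpson, Pt. }
  rewrite (is_RInt_unique _ _ _ _ (composite_simpson _ Q dy Ny Hy HQ Inner)).
  apply sumN_ext. intros j _. unfold Q.
  rewrite simpson_sumN, <- sumN_scal. apply sumN_ext. intros i _.
  unfold simpson2, simpson. field.
Qed.

(* The integral over the reference square of the square of the bilinear function
   with corner values u00, u10, u01, u11 (the Q1 element mass matrix). *)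
Definition mass4 (u00 u10 u01 u11 : R) : R :=
  (4 * (u00 ^ 2 + u10 ^ 2 + u01 ^ 2 + u11 ^ 2)
   + 4 * (u00 * u10 + u01 * u11 + u00 * u01 + u10 * u11)
   + 2 * (u00 * u11 + u10 * u01)) / 36.

(* The integral over [0,1] of the product of the affine functions with end values
   p0, p1 and q0, q1 (the P1 element mass matrix on an edge). *)
Definition edge_mass (p0 p1 q0 q1 : R) : R := (2 * p0 * q0 + p0 * q1 + p1 * q0 + 2 * p1 * q1) / 6.

Lemma edge_mass_nonneg p0 p1 : 0 <= edge_mass p0 p1 p0 p1.
Proof. unfold edge_mass. nra. Qed.

Lemma mass4_ge_squares a b c d : (a ^ 2 + b ^ 2 + c ^ 2 + d ^ 2) / 36 <= mass4 a b c d.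
Proof.
  assert (E := edge_mass_nonneg (a + b) (c + d)).
  assert (Sq1 := pow2_ge_0 (a + c)). assert (Sq2 := pow2_ge_0 (b + d)).
  unfold mass4, edge_mass in *. nra.
Qed.

Lemma mass4_ge_edges a b c d :
  edge_mass a c a c + edge_mass b d b d + edge_mass a b a b + edge_mass c d c d <= 12 * mass4 a b c d.
Proof.
  assert (E1 := edge_mass_nonneg (a + b) (c + d)). assert (E2 := edge_mass_nonneg (a + c) (b + d)).
  unfold mass4, edge_mass in *. nra.
Qed.

Lemma edge_mass_cauchy p0 p1 q0 q1 :
  - edge_mass p0 p1 q0 q1 <= 3 * edge_mass p0 p1 p0 p1 + edge_mass q0 q1 q0 q1 / 12.
Proof.
  assert (E := edge_mass_nonneg (3 * p0 + q0 / 2) (3 * p1 + q1 / 2)).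
  unfold edge_mass in *. nra.
Qed.

Lemma edge_mass_le_squares p0 p1 : edge_mass p0 p1 p0 p1 <= (p0 ^ 2 + p1 ^ 2) / 2.
Proof. assert (E := pow2_ge_0 (p0 - p1)). unfold edge_mass. nra. Qed.

Definition diff (a b : Z) (h : R) (u : Z -> Z -> R) (i j : Z) : R :=
  (u (i + a)%Z (j + b)%Z - u i j) / h.

Definition diff2 (a b : Z) (h : R) (u : Z -> Z -> R) (i j : Z) : R :=
  (u (i + a)%Z (j + b)%Z - 2 * u i j + u (i - a)%Z (j - b)%Z) / h ^ 2.

Definition grid_lap (h k : R) (u : Z -> Z -> R) (i j : Z) : R :=
  diff2 1 0 h u i j + diff2 0 1 k u i j.

Definition cell_mass (u : Z -> Z -> R) (i j : Z) : R :=
  mass4 (u i j) (u (i + 1)%Z j) (u i (j + 1)%Z) (u (i + 1)%Z (j + 1)%Z).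

Section GridSums.
Variables (Nx Ny : nat).

Definition periodic (u : Z -> Z -> R) : Prop :=
  (forall i j, u (i + Z.of_nat Nx)%Z j = u i j) /\ (forall i j, u i (j + Z.of_nat Ny)%Z = u i j).

Definition gsum (g : Z -> Z -> R) : R :=
  sumN Ny (fun j => sumN Nx (fun i => g (Z.of_nat i) (Z.of_nat j))).

Lemma periodic_shiftx a u : periodic u -> periodic (fun i j => u (i + a)%Z j).
Proof.
  intros [Px Py]. split; intros i j; [|apply Py].
  replace (i + Z.of_nat Nx + a)%Z with (i + a + Z.of_nat Nx)%Z by ring. apply Px.
Qed.

Lemma periodic_shifty b u : periodic u -> periodic (fun i j => u i (j + b)%Z).
Proof.
  intros [Px Py]. split; intros i j; [apply Px|].
  replace (j + Z.of_nat Ny + b)%Z with (j + b + Z.of_nat Ny)%Z by ring. apply Py.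
Qed.

Lemma periodic_shift a b u : periodic u -> periodic (fun i j => u (i + a)%Z (j + b)%Z).
Proof. intros Pu. apply (periodic_shiftx a (fun i j => u i (j + b)%Z)), periodic_shifty, Pu. Qed.

Lemma periodic_lift4 (F : R -> R -> R -> R -> R) u v w z :
  periodic u -> periodic v -> periodic w -> periodic z ->
  periodic (fun i j => F (u i j) (v i j) (w i j) (z i j)).
Proof.
  intros [Pu Qu] [Pv Qv] [Pw Qw] [Pz Qz].
  split; intros i j; [rewrite Pu, Pv, Pw, Pz|rewrite Qu, Qv, Qw, Qz]; reflexivity.
Qed.

Lemma periodic_lift3 (F : R -> R -> R -> R) u v w :
  periodic u -> periodic v -> periodic w -> periodic (fun i j => F (u i j) (v i j) (w i j)).
Proof. intros Pu Pv Pw. exact (periodic_lift4 (fun p q r _ => F p q r) u v w w Pu Pv Pw Pw). Qed.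

Lemma periodic_lift2 (F : R -> R -> R) u v :
  periodic u -> periodic v -> periodic (fun i j => F (u i j) (v i j)).
Proof. intros Pu Pv. exact (periodic_lift4 (fun p q _ _ => F p q) u v u u Pu Pv Pu Pu). Qed.

Lemma periodic_diff a b h u : periodic u -> periodic (diff a b h u).
Proof.
  intros Pu. apply (periodic_lift2 (fun p q => (p - q) / h) (fun i j => u (i + a)%Z (j + b)%Z) u);
    [apply periodic_shift|]; exact Pu.
Qed.

Lemma periodic_diff2 a b h u : periodic u -> periodic (diff2 a b h u).
Proof.
  intros Pu. apply (periodic_lift3 (fun p q r => (p - 2 * q + r) / h ^ 2)
    (fun i j => u (i + a)%Z (j + b)%Z) u (fun i j => u (i + - a)%Z (j + - b)%Z));
    [apply periodic_shift| |apply periodic_shift]; exact Pu.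
Qed.

Lemma gsum_ext F G : (forall i j, F i j = G i j) -> gsum F = gsum G.
Proof. intros E. unfold gsum. apply sumN_ext; intros. apply sumN_ext; intros. apply E. Qed.

Lemma gsum_le F G : (forall i j, F i j <= G i j) -> gsum F <= gsum G.
Proof. intros E. unfold gsum. apply sumN_le; intros. apply sumN_le; intros. apply E. Qed.

Lemma gsum_plus F G : gsum (fun i j => F i j + G i j) = gsum F + gsum G.
Proof. unfold gsum. rewrite <- sumN_plus. apply sumN_ext; intros. apply sumN_plus. Qed.

Lemma gsum_scal c F : gsum (fun i j => c * F i j) = c * gsum F.
Proof. unfold gsum. rewrite <- sumN_scal. apply sumN_ext; intros. apply sumN_scal. Qed.

Lemma gsum_nonneg F : (forall i j, 0 <= F i j) -> 0 <= gsum F.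
Proof.
  intros HF. replace 0 with (0 * gsum F) by ring. rewrite <- gsum_scal.
  apply gsum_le. intros i j. rewrite Rmult_0_l. apply HF.
Qed.

Lemma gsum_shift1x g : periodic g -> gsum (fun i j => g (i + 1)%Z j) = gsum g.
Proof.
  intros [Px _]. unfold gsum. apply sumN_ext. intros j _.
  rewrite (sumN_shift (fun i => g i (Z.of_nat j))), <- (Z.add_0_l (Z.of_nat Nx)), Px. ring.
Qed.

Lemma gsum_shift1y g : periodic g -> gsum (fun i j => g i (j + 1)%Z) = gsum g.
Proof.
  intros [_ Py]. unfold gsum.
  rewrite (sumN_shift (fun j => sumN Nx (fun i => g (Z.of_nat i) j))).
  rewrite (sumN_ext Nx (fun i => g (Z.of_nat i) (Z.of_nat Ny)) (fun i => g (Z.of_nat i) 0%Z)).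
  - ring.
  - intros i _. rewrite <- (Z.add_0_l (Z.of_nat Ny)). apply Py.
Qed.

Lemma gsum_shiftx a g : periodic g -> gsum (fun i j => g (i + a)%Z j) = gsum g.
Proof.
  revert g. induction a as [|a IH|a IH] using Z.peano_ind; intros g Pg.
  - apply gsum_ext. intros i j. rewrite Z.add_0_r. reflexivity.
  - rewrite <- (IH g Pg), <- (gsum_shift1x (fun i j => g (i + a)%Z j)) by (apply periodic_shiftx, Pg).
    apply gsum_ext. intros i j. f_equal. lia.
  - rewrite <- (IH g Pg), <- (gsum_shift1x (fun i j => g (i + Z.pred a)%Z j)) by (apply periodic_shiftx, Pg).
    apply gsum_ext. intros i j. f_equal. lia.
Qed.

Lemma gsum_shifty b g : periodic g -> gsum (fun i j => g i (j + b)%Z) = gsum g.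
Proof.
  revert g. induction b as [|b IH|b IH] using Z.peano_ind; intros g Pg.
  - apply gsum_ext. intros i j. rewrite Z.add_0_r. reflexivity.
  - rewrite <- (IH g Pg), <- (gsum_shift1y (fun i j => g i (j + b)%Z)) by (apply periodic_shifty, Pg).
    apply gsum_ext. intros i j. f_equal. lia.
  - rewrite <- (IH g Pg), <- (gsum_shift1y (fun i j => g i (j + Z.pred b)%Z)) by (apply periodic_shifty, Pg).
    apply gsum_ext. intros i j. f_equal. lia.
Qed.

Lemma gsum_shift a b g : periodic g -> gsum (fun i j => g (i + a)%Z (j + b)%Z) = gsum g.
Proof.
  intros Pg. rewrite (gsum_shiftx a (fun i j => g i (j + b)%Z)) by (apply periodic_shifty, Pg).
  apply gsum_shifty, Pg.
Qed.

Lemma gsum_telescope a b w : periodic w -> gsum (fun i j => w (i + a)%Z (j + b)%Z - w i j) = 0.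
Proof.
  intros Pw.
  rewrite (gsum_ext _ (fun i j => w (i + a)%Z (j + b)%Z + -1 * w i j)) by (intros; ring).
  rewrite gsum_plus, gsum_scal, gsum_shift by exact Pw. ring.
Qed.

(* The edge mass form pairing u and v along all edges of direction (c,d);
   the integral of a product of functions that are affine along such edges. *)
Definition eform (c d : Z) (u v : Z -> Z -> R) : R :=
  gsum (fun i j => edge_mass (u i j) (u (i + c)%Z (j + d)%Z) (v i j) (v (i + c)%Z (j + d)%Z)).

Lemma summation_by_parts a b c d h u v : h <> 0 -> periodic u -> periodic v ->
  eform c d (diff a b h u) (diff a b h v) = - eform c d (diff2 a b h u) v.
Proof.
  intros Hh Pu Pv.
  set (w := fun i j => edge_mass (diff a b h u (i - a)%Z (j - b)%Z)
                        (diff a b h u (i - a + c)%Z (j - b + d)%Z) (v i j) (v (i + c)%Z (j + d)%Z) / h).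
  assert (Pw : periodic w).
  { apply (periodic_lift4 (fun p q r s => edge_mass p q r s / h)
      (fun i j => diff a b h u (i + - a)%Z (j + - b)%Z)
      (fun i j => diff a b h u (i + - a + c)%Z (j + - b + d)%Z) v (fun i j => v (i + c)%Z (j + d)%Z)).
    - apply periodic_shift, periodic_diff, Pu.
    - apply (periodic_shift (- a) (- b) (fun i j => diff a b h u (i + c)%Z (j + d)%Z)),
        periodic_shift, periodic_diff, Pu.
    - exact Pv.
    - apply periodic_shift, Pv. }
  assert (Pointwise : forall i j,
    edge_mass (diff a b h u i j) (diff a b h u (i + c)%Z (j + d)%Z)
              (diff a b h v i j) (diff a b h v (i + c)%Z (j + d)%Z) =
    -1 * edge_mass (diff2 a b h u i j) (diff2 a b h u (i + c)%Z (j + d)%Z) (v i j) (v (i + c)%Z (j + d)%Z)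
    + (w (i + a)%Z (j + b)%Z - w i j)).
  { intros i j. unfold w, diff, diff2, edge_mass.
    rewrite !Z.add_simpl_r, !Z.sub_add.
    replace (i + a + c)%Z with (i + c + a)%Z by ring.
    replace (j + b + d)%Z with (j + d + b)%Z by ring.
    replace (i - a + c + a)%Z with (i + c)%Z by ring.
    replace (j - b + d + b)%Z with (j + d)%Z by ring.
    replace (i - a + c)%Z with (i + c - a)%Z by ring.
    replace (j - b + d)%Z with (j + d - b)%Z by ring.
    field. exact Hh. }
  unfold eform. rewrite (gsum_ext _ _ Pointwise), gsum_plus, gsum_scal, gsum_telescope by exact Pw.
  ring.
Qed.

Lemma eform_cauchy c d p v : - eform c d p v <= 3 * eform c d p p + eform c d v v / 12.
Proof.
  set (em := fun u w i j => edge_mass (u i j) (u (i + c)%Z (j + d)%Z) (w i j) (w (i + c)%Z (j + d)%Z)).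
  assert (Le : gsum (fun i j => -1 * em p v i j) <= gsum (fun i j => 3 * em p p i j + / 12 * em v v i j)).
  { apply gsum_le. intros i j.
    assert (C := edge_mass_cauchy (p i j) (p (i + c)%Z (j + d)%Z) (v i j) (v (i + c)%Z (j + d)%Z)).
    unfold em. lra. }
  rewrite gsum_plus, !gsum_scal in Le. unfold eform. fold (em p v) (em p p) (em v v). lra.
Qed.

Lemma eform_le_squares c d p : periodic p -> eform c d p p <= gsum (fun i j => p i j ^ 2).
Proof.
  intros Pp.
  assert (P2 : periodic (fun i j => p i j ^ 2)) by exact (periodic_lift2 (fun x _ => x ^ 2) p p Pp Pp).
  assert (Le : eform c d p p <= gsum (fun i j => / 2 * p i j ^ 2 + / 2 * p (i + c)%Z (j + d)%Z ^ 2)).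
  { apply gsum_le. intros i j.
    assert (E := edge_mass_le_squares (p i j) (p (i + c)%Z (j + d)%Z)). lra. }
  rewrite gsum_plus, !gsum_scal, (gsum_shift c d _ P2) in Le. lra.
Qed.

Lemma eforms_le_mass v : periodic v -> eform 0 1 v v + eform 1 0 v v <= 6 * gsum (cell_mass v).
Proof.
  intros Pv.
  set (Ey := fun i j => edge_mass (v i j) (v i (j + 1)%Z) (v i j) (v i (j + 1)%Z)).
  set (Ex := fun i j => edge_mass (v i j) (v (i + 1)%Z j) (v i j) (v (i + 1)%Z j)).
  assert (Py : periodic Ey).
  { apply (periodic_lift4 edge_mass v (fun i j => v i (j + 1)%Z) v (fun i j => v i (j + 1)%Z));
      try apply periodic_shifty; exact Pv. }
  assert (Px : periodic Ex).
  { apply (periodic_lift4 edge_mass v (fun i j => v (i + 1)%Z j) v (fun i j => v (i + 1)%Z j));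
      try apply periodic_shiftx; exact Pv. }
  assert (E01 : eform 0 1 v v = gsum Ey) by (apply gsum_ext; intros; rewrite Z.add_0_r; reflexivity).
  assert (E10 : eform 1 0 v v = gsum Ex) by (apply gsum_ext; intros; rewrite Z.add_0_r; reflexivity).
  assert (Le : gsum (fun i j => Ey i j + Ey (i + 1)%Z j + Ex i j + Ex i (j + 1)%Z)
               <= gsum (fun i j => 12 * cell_mass v i j)).
  { apply gsum_le. intros i j. apply mass4_ge_edges. }
  rewrite !gsum_plus, gsum_scal, (gsum_shiftx 1 Ey Py), (gsum_shifty 1 Ex Px) in Le. lra.
Qed.

Lemma squares_le_mass v : periodic v -> gsum (fun i j => v i j ^ 2) <= 9 * gsum (cell_mass v).
Proof.
  intros Pv.
  set (sq := fun i j => v i j ^ 2).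
  assert (Psq : periodic sq) by exact (periodic_lift2 (fun x _ => x ^ 2) v v Pv Pv).
  assert (Le : gsum (fun i j => sq i j + sq (i + 1)%Z j + sq i (j + 1)%Z + sq (i + 1)%Z (j + 1)%Z)
               <= gsum (fun i j => 36 * cell_mass v i j)).
  { apply gsum_le. intros i j. assert (M := mass4_ge_squares (v i j) (v (i + 1)%Z j)
      (v i (j + 1)%Z) (v (i + 1)%Z (j + 1)%Z)). unfold sq, cell_mass. lra. }
  rewrite !gsum_plus, gsum_scal, (gsum_shiftx 1 sq Psq), (gsum_shifty 1 sq Psq),
    (gsum_shift 1 1 sq Psq) in Le.
  fold sq. lra.
Qed.

(* The product of the x- and y-second differences has nonnegative period sum:
   it telescopes to the sum of the squared mixed differences. *)
Lemma mixed_differences_nonneg h k u : h <> 0 -> k <> 0 -> periodic u ->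
  0 <= gsum (fun i j => diff2 1 0 h u i j * diff2 0 1 k u i j).
Proof.
  intros Hh Hk Pu.
  set (Dx := diff 1 0 h u). set (Y := diff2 0 1 k u).
  assert (PDx : periodic Dx) by exact (periodic_diff 1 0 h u Pu).
  assert (PY : periodic Y) by exact (periodic_diff2 0 1 k u Pu).
  set (w1 := fun i j => Dx (i - 1)%Z j * Y i j / h).
  set (w2 := fun i j => - Dx i j * (Dx i j - Dx i (j - 1)%Z) / k ^ 2).
  assert (Pw1 : periodic w1).
  { exact (periodic_lift2 (fun p q => p * q / h) _ Y (periodic_shiftx (-1) Dx PDx) PY). }
  assert (Pw2 : periodic w2).
  { exact (periodic_lift2 (fun p q => - p * (p - q) / k ^ 2) Dx _ PDx (periodic_shifty (-1) Dx PDx)). }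
  assert (Pointwise : forall i j, diff2 1 0 h u i j * Y i j =
    diff 0 1 k Dx i j ^ 2 + (w1 (i + 1)%Z (j + 0)%Z - w1 i j) + (w2 (i + 0)%Z (j + 1)%Z - w2 i j)).
  { intros i j. unfold w1, w2, Y, Dx, diff, diff2.
    rewrite ?Z.add_0_r, ?Z.sub_0_r, ?Z.add_simpl_r, ?Z.sub_add. field. split; assumption. }
  rewrite (gsum_ext _ _ Pointwise), !gsum_plus, (gsum_telescope 1 0 w1 Pw1), (gsum_telescope 0 1 w2 Pw2).
  rewrite !Rplus_0_r. apply gsum_nonneg. intros i j. apply pow2_ge_0.
Qed.

Lemma discrete_estimate h k u v : 0 < h -> 0 < k -> periodic u -> periodic v ->
  gsum (cell_mass v) = eform 0 1 (diff 1 0 h u) (diff 1 0 h v) + eform 1 0 (diff 0 1 k u) (diff 0 1 k v) ->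
  gsum (cell_mass v) <= 54 * gsum (cell_mass (grid_lap h k u)).
Proof.
  intros Hh Hk Pu Pv E.
  rewrite !summation_by_parts in E by (lra || assumption).
  assert (Cross := mixed_differences_nonneg h k u (Rgt_not_eq _ _ Hh) (Rgt_not_eq _ _ Hk) Pu).
  set (X := diff2 1 0 h u) in *. set (Y := diff2 0 1 k u) in *.
  assert (PX : periodic X) by exact (periodic_diff2 1 0 h u Pu).
  assert (PY : periodic Y) by exact (periodic_diff2 0 1 k u Pu).
  assert (PW : periodic (grid_lap h k u)) by exact (periodic_lift2 Rplus X Y PX PY).
  assert (C1 := eform_cauchy 0 1 X v). assert (C2 := eform_cauchy 1 0 Y v).
  assert (L1 := eform_le_squares 0 1 X PX). assert (L2 := eform_le_squares 1 0 Y PY).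
  assert (M := eforms_le_mass v Pv).
  assert (W := squares_le_mass _ PW).
  assert (EW : gsum (fun i j => grid_lap h k u i j ^ 2) =
    gsum (fun i j => X i j ^ 2) + gsum (fun i j => Y i j ^ 2) + 2 * gsum (fun i j => X i j * Y i j)).
  { rewrite <- gsum_scal, <- !gsum_plus. apply gsum_ext. intros i j. unfold grid_lap. fold X Y. ring. }
  lra.
Qed.

End GridSums.

Definition bil (u00 u10 u01 u11 s t : R) : R :=
  u00 * (1 - s) * (1 - t) + u10 * s * (1 - t) + u01 * (1 - s) * t + u11 * s * t.

Lemma quad_bil_prod_s u00 u10 u01 u11 v00 v10 v01 v11 t :
  quad (fun s => bil u00 u10 u01 u11 s t * bil v00 v10 v01 v11 s t).
Proof.
  eapply quad_ext; [|apply (quad_mul_affine (u00 * (1 - t) + u01 * t)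
                      ((u10 - u00) * (1 - t) + (u11 - u01) * t)
                      (v00 * (1 - t) + v01 * t) ((v10 - v00) * (1 - t) + (v11 - v01) * t))].
  intros s. unfold bil. ring.
Qed.

Lemma quad_bil_prod_t u00 u10 u01 u11 v00 v10 v01 v11 s :
  quad (fun t => bil u00 u10 u01 u11 s t * bil v00 v10 v01 v11 s t).
Proof.
  eapply quad_ext; [|apply (quad_mul_affine (u00 * (1 - s) + u10 * s)
                      ((u01 - u00) * (1 - s) + (u11 - u10) * s)
                      (v00 * (1 - s) + v10 * s) ((v01 - v00) * (1 - s) + (v11 - v10) * s))].
  intros t. unfold bil. ring.
Qed.

Lemma bil_self_interp (a b c d x0 y0 h k x y : R) : h <> 0 -> k <> 0 ->
  let F := fun x y => a + b * x + c * y + d * x * y in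
  F x y = bil (F x0 y0) (F (x0 + h) y0) (F x0 (y0 + k)) (F (x0 + h) (y0 + k))
              ((x - x0) / h) ((y - y0) / k).
Proof. intros Hh Hk F. unfold F, bil. field. auto. Qed.

Lemma hx_pos Lx Nx : 0 < Lx -> (0 < Nx)%nat -> 0 < hx Lx Nx.
Proof. intros. apply Rdiv_lt_0_compat; [assumption|apply lt_0_INR; assumption]. Qed.

Lemma hy_pos Ly Ny : 0 < Ly -> (0 < Ny)%nat -> 0 < hy Ly Ny.
Proof. intros. apply Rdiv_lt_0_compat; [assumption|apply lt_0_INR; assumption]. Qed.

Lemma Lx_eq Lx Nx : (0 < Nx)%nat -> Lx = INR Nx * hx Lx Nx.
Proof. intros. unfold hx. field. apply not_0_INR. lia. Qed.

Lemma Ly_eq Ly Ny : (0 < Ny)%nat -> Ly = INR Ny * hy Ly Ny.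
Proof. intros. unfold hy. field. apply not_0_INR. lia. Qed.

Lemma periodic_Z (g : R -> R) (L : R) :
  (forall x, g (x + L) = g x) -> forall z x, g (x + IZR z * L) = g x.
Proof.
  intros Hg z. induction z as [|z IH|z IH] using Z.peano_ind; intros x.
  - rewrite Rmult_0_l, Rplus_0_r. reflexivity.
  - rewrite succ_IZR. replace (x + (IZR z + 1) * L) with (x + IZR z * L + L) by ring.
    rewrite Hg. apply IH.
  - unfold Z.pred. rewrite plus_IZR, <- Hg. replace (x + (IZR z + IZR (-1)) * L + L) with (x + IZR z * L) by ring.
    apply IH.
Qed.

Definition node (Lx Ly : R) (Nx Ny : nat) (f : R -> R -> R) (i j : Z) : R :=
  f (IZR i * hx Lx Nx) (IZR j * hy Ly Ny).

Definition interp (h k : R) (U : Z -> Z -> R) (i j : Z) (x y : R) : R :=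
  bil (U i j) (U (i + 1)%Z j) (U i (j + 1)%Z) (U (i + 1)%Z (j + 1)%Z)
      ((x - IZR i * h) / h) ((y - IZR j * k) / k).

Lemma locally_interval (x a b : R) (P : R -> Prop) :
  a < x < b -> (forall t, a < t < b -> P t) -> locally x P.
Proof.
  intros Hx HP.
  assert (He : 0 < Rmin (x - a) (b - x)) by (apply Rmin_pos; lra).
  exists (mkposreal _ He). intros t Ht.
  change (Rabs (t - x) < Rmin (x - a) (b - x)) in Ht.
  apply Rabs_lt_between' in Ht.
  assert (Rmin (x - a) (b - x) <= x - a) by apply Rmin_l.
  assert (Rmin (x - a) (b - x) <= b - x) by apply Rmin_r.
  apply HP. lra.
Qed.

Section UhCells.
Variables (Lx Ly : R) (Nx Ny : nat) (f : R -> R -> R).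
Hypotheses (HLx : 0 < Lx) (HLy : 0 < Ly) (HNx : (0 < Nx)%nat) (HNy : (0 < Ny)%nat)
  (Hf : in_Uh Lx Ly Nx Ny f).

Local Notation h := (hx Lx Nx).
Local Notation k := (hy Ly Ny).

Lemma Uh_periodic p q x y : f (x + IZR p * Lx) (y + IZR q * Ly) = f x y.
Proof.
  destruct Hf as [Px [Py _]].
  rewrite (periodic_Z (fun t => f t _) Lx (fun t => Px t _)).
  exact (periodic_Z (f x) Ly (Py x) q y).
Qed.

Lemma node_periodic : periodic Nx Ny (node Lx Ly Nx Ny f).
Proof.
  destruct Hf as [Px [Py _]].
  split; intros i j; unfold node; rewrite plus_IZR, <- INR_IZR_INZ, Rmult_plus_distr_r.
  - rewrite <- (Lx_eq Lx Nx HNx). apply Px.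
  - rewrite <- (Ly_eq Ly Ny HNy). apply Py.
Qed.

Lemma Uh_fundamental_cell (i j : Z) x y :
  (0 <= i < Z.of_nat Nx)%Z -> (0 <= j < Z.of_nat Ny)%Z ->
  IZR i * h <= x <= IZR (i + 1) * h -> IZR j * k <= y <= IZR (j + 1) * k ->
  f x y = interp h k (node Lx Ly Nx Ny f) i j x y.
Proof.
  intros Hi Hj Hx Hy.
  assert (Hh := hx_pos Lx Nx HLx HNx). assert (Hk := hy_pos Ly Ny HLy HNy).
  destruct Hf as [_ [_ [_ Hcell]]].
  destruct (Hcell (Z.to_nat i) (Z.to_nat j)) as [a [b [c [d Hbil]]]]; [lia|lia|].
  assert (Ei : INR (Z.to_nat i) = IZR i) by (rewrite INR_IZR_INZ, Z2Nat.id by lia; reflexivity).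
  assert (Ej : INR (Z.to_nat j) = IZR j) by (rewrite INR_IZR_INZ, Z2Nat.id by lia; reflexivity).
  rewrite !S_INR, Ei, Ej in Hbil. rewrite plus_IZR in Hx, Hy.
  unfold interp, node. rewrite !plus_IZR.
  rewrite !Hbil by lra.
  replace ((IZR i + 1) * h) with (IZR i * h + h) by ring.
  replace ((IZR j + 1) * k) with (IZR j * k + k) by ring.
  apply bil_self_interp; lra.
Qed.

Lemma Uh_cell (i j : Z) x y :
  IZR i * h <= x <= IZR (i + 1) * h -> IZR j * k <= y <= IZR (j + 1) * k ->
  f x y = interp h k (node Lx Ly Nx Ny f) i j x y.
Proof.
  intros Hx Hy.
  set (NX := Z.of_nat Nx). set (NY := Z.of_nat Ny).
  set (p := (i / NX)%Z). set (r := (i mod NX)%Z).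
  set (q := (j / NY)%Z). set (s := (j mod NY)%Z).
  assert (Ei : i = (r + p * NX)%Z) by (unfold r, p; rewrite (Z.div_mod i NX) at 1 by (unfold NX; lia); ring).
  assert (Ej : j = (s + q * NY)%Z) by (unfold s, q; rewrite (Z.div_mod j NY) at 1 by (unfold NY; lia); ring).
  assert (Hr : (0 <= r < NX)%Z) by (apply Z.mod_pos_bound; unfold NX; lia).
  assert (Hs : (0 <= s < NY)%Z) by (apply Z.mod_pos_bound; unfold NY; lia).
  assert (ELx : Lx = IZR NX * h) by (unfold NX; rewrite <- INR_IZR_INZ; apply Lx_eq; exact HNx).
  assert (ELy : Ly = IZR NY * k) by (unfold NY; rewrite <- INR_IZR_INZ; apply Ly_eq; exact HNy).
  assert (Sx : forall c, IZR (i + c) * h = IZR (r + c) * h + IZR p * Lx).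
  { intros c. set (h0 := h) in *. rewrite ELx, Ei, !plus_IZR, mult_IZR. ring. }
  assert (Sy : forall c, IZR (j + c) * k = IZR (s + c) * k + IZR q * Ly).
  { intros c. set (k0 := k) in *. rewrite ELy, Ej, !plus_IZR, mult_IZR. ring. }
  assert (Sx0 := Sx 0%Z). assert (Sy0 := Sy 0%Z). rewrite !Z.add_0_r in Sx0, Sy0.
  assert (Hnode : forall a b, node Lx Ly Nx Ny f (i + a) (j + b) = node Lx Ly Nx Ny f (r + a) (s + b)).
  { intros a b. unfold node. rewrite Sx, Sy. apply Uh_periodic. }
  replace (f x y) with (f (x - IZR p * Lx) (y - IZR q * Ly))
    by (rewrite <- (Uh_periodic p q); f_equal; ring).
  unfold interp.
  rewrite <- (Z.add_0_r i) at 1 3. rewrite <- (Z.add_0_r j) at 1 2.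
  rewrite !Hnode, !Z.add_0_r, Sx0, Sy0.
  rewrite (Uh_fundamental_cell r s (x - IZR p * Lx) (y - IZR q * Ly)); auto.
  - unfold interp. do 2 f_equal; ring.
  - rewrite Sx, Sx0 in Hx. lra.
  - rewrite Sy, Sy0 in Hy. lra.
Qed.

Lemma dX_cell (i j : Z) x y :
  IZR i * h < x < IZR (i + 1) * h -> IZR j * k <= y <= IZR (j + 1) * k ->
  let d := diff 1 0 h (node Lx Ly Nx Ny f) in
  dX f x y = bil (d i j) (d i j) (d i (j + 1)%Z) (d i (j + 1)%Z)
                 ((x - IZR i * h) / h) ((y - IZR j * k) / k).
Proof.
  intros Hx Hy d.
  assert (Hh := hx_pos Lx Nx HLx HNx). assert (Hk := hy_pos Ly Ny HLy HNy).
  unfold dX. rewrite (Derive_ext_loc _ (fun z => interp h k (node Lx Ly Nx Ny f) i j z y)).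
  - apply is_derive_unique. unfold interp, bil, d, diff. rewrite !Z.add_0_r.
    auto_derive; [lra|]. field. lra.
  - apply (locally_interval x _ _ _ Hx). intros t Ht. apply Uh_cell; lra.
Qed.

Lemma dY_cell (i j : Z) x y :
  IZR i * h <= x <= IZR (i + 1) * h -> IZR j * k < y < IZR (j + 1) * k ->
  let d := diff 0 1 k (node Lx Ly Nx Ny f) in
  dY f x y = bil (d i j) (d (i + 1)%Z j) (d i j) (d (i + 1)%Z j)
                 ((x - IZR i * h) / h) ((y - IZR j * k) / k).
Proof.
  intros Hx Hy d.
  assert (Hh := hx_pos Lx Nx HLx HNx). assert (Hk := hy_pos Ly Ny HLy HNy).
  unfold dY. rewrite (Derive_ext_loc _ (fun z => interp h k (node Lx Ly Nx Ny f) i j x z)).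
  - apply is_derive_unique. unfold interp, bil, d, diff. rewrite !Z.add_0_r.
    auto_derive; [lra|]. field. lra.
  - apply (locally_interval y _ _ _ Hy). intros t Ht. apply Uh_cell; lra.
Qed.

Lemma lap_cell (i j : Z) x y :
  IZR i * h < x < IZR (i + 1) * h -> IZR j * k < y < IZR (j + 1) * k ->
  lap_h Lx Ly Nx Ny f x y = interp h k (grid_lap h k (node Lx Ly Nx Ny f)) i j x y.
Proof.
  intros Hx Hy.
  assert (Hh := hx_pos Lx Nx HLx HNx). assert (Hk := hy_pos Ly Ny HLy HNy).
  rewrite !plus_IZR in Hx, Hy.
  unfold lap_h.
  rewrite (Uh_cell (i + 1) j (x + h) y), (Uh_cell i j x y), (Uh_cell (i - 1) j (x - h) y),
    (Uh_cell i (j + 1) x (y + k)), (Uh_cell i (j - 1) x (y - k));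
    rewrite ?plus_IZR, ?minus_IZR; try lra.
  unfold interp, grid_lap, diff2.
  rewrite ?Z.add_0_r, ?Z.sub_0_r, ?Z.add_simpl_r, ?Z.sub_add, ?plus_IZR, ?minus_IZR.
  unfold bil. field. lra.
Qed.

End UhCells.

Lemma simpson2_bil_square u00 u10 u01 u11 :
  simpson2 (fun s t => bil u00 u10 u01 u11 s t * bil u00 u10 u01 u11 s t) / 36 =
  mass4 u00 u10 u01 u11.
Proof. unfold simpson2, simpson, bil, mass4. field. Qed.

Lemma simpson2_bil_gradient p0 p1 a0 a1 q0 q1 b0 b1 :
  simpson2 (fun s t => bil p0 p0 p1 p1 s t * bil a0 a0 a1 a1 s t
                       + bil q0 q1 q0 q1 s t * bil b0 b1 b0 b1 s t) / 36 =
  edge_mass p0 p1 a0 a1 + edge_mass q0 q1 b0 b1.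
Proof. unfold simpson2, simpson, bil, edge_mass. field. Qed.

Lemma integO_ext Lx Ly (F G : R -> R -> R) :
  (forall x y, F x y = G x y) -> integO Lx Ly F = integO Lx Ly G.
Proof.
  intros E. unfold integO. apply RInt_ext. intros y _. apply RInt_ext. intros x _. apply E.
Qed.

Section Integrals.
Variables (Lx Ly : R) (Nx Ny : nat).
Hypotheses (HLx : 0 < Lx) (HLy : 0 < Ly) (HNx : (0 < Nx)%nat) (HNy : (0 < Ny)%nat).

Local Notation h := (hx Lx Nx).
Local Notation k := (hy Ly Ny).

Definition on_cells (F : R -> R -> R) (P : Z -> Z -> R -> R -> R) : Prop :=
  forall (i j : Z) x y, (0 <= i < Z.of_nat Nx)%Z -> (0 <= j < Z.of_nat Ny)%Z ->
    IZR i * h < x < IZR (i + 1) * h -> IZR j * k < y < IZR (j + 1) * k ->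
    F x y = P i j ((x - IZR i * h) / h) ((y - IZR j * k) / k).

Lemma integO_cellwise (F : R -> R -> R) (P : Z -> Z -> R -> R -> R) :
  (forall i j t, quad (fun s => P i j s t)) -> (forall i j s, quad (fun t => P i j s t)) ->
  on_cells F P -> integO Lx Ly F = h * k * gsum Nx Ny (fun i j => simpson2 (P i j) / 36).
Proof.
  intros Ps Pt HF.
  assert (Hh := hx_pos Lx Nx HLx HNx). assert (Hk := hy_pos Ly Ny HLy HNy).
  assert (ELx := Lx_eq Lx Nx HNx). assert (ELy := Ly_eq Ly Ny HNy).
  unfold integO. set (h0 := h) in *. set (k0 := k) in *.
  rewrite ELx, ELy.
  rewrite (iterated_simpson F (fun i j => P (Z.of_nat i) (Z.of_nat j))); auto.
  - rewrite <- gsum_scal. unfold gsum. apply sumN_ext. intros j _. apply sumN_ext. intros i _.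
    unfold Rdiv. ring.
  - intros i j x y Hi Hj Hx Hy. rewrite !S_INR, !INR_IZR_INZ in Hx, Hy.
    rewrite (HF (Z.of_nat i) (Z.of_nat j)); rewrite ?plus_IZR; fold h0 k0; try lia; try lra.
    rewrite !INR_IZR_INZ. reflexivity.
Qed.

Lemma integO_square (F : R -> R -> R) (U : Z -> Z -> R) :
  on_cells F (fun i j s t => bil (U i j) (U (i + 1)%Z j) (U i (j + 1)%Z) (U (i + 1)%Z (j + 1)%Z) s t) ->
  integO Lx Ly (fun x y => F x y ^ 2) = h * k * gsum Nx Ny (cell_mass U).
Proof.
  intros HF.
  set (b := fun i j s t => bil (U i j) (U (i + 1)%Z j) (U i (j + 1)%Z) (U (i + 1)%Z (j + 1)%Z) s t).
  rewrite (integO_ext _ _ _ (fun x y => F x y * F x y)) by (intros; ring).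
  rewrite (integO_cellwise _ (fun i j s t => b i j s t * b i j s t)).
  - f_equal. apply gsum_ext. intros i j. apply simpson2_bil_square.
  - intros i j t. apply quad_bil_prod_s.
  - intros i j s. apply quad_bil_prod_t.
  - intros i j x y Hi Hj Hx Hy. rewrite (HF i j x y); auto.
Qed.

Lemma integO_gradient (phi a : R -> R -> R) :
  in_Uh Lx Ly Nx Ny phi -> in_Uh Lx Ly Nx Ny a ->
  let P := node Lx Ly Nx Ny phi in let A := node Lx Ly Nx Ny a in
  integO Lx Ly (fun x y => dX phi x y * dX a x y + dY phi x y * dY a x y) =
  h * k * (eform Nx Ny 0 1 (diff 1 0 h P) (diff 1 0 h A) + eform Nx Ny 1 0 (diff 0 1 k P) (diff 0 1 k A)).
Proof.
  intros Hphi Ha P A.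
  set (dP := diff 1 0 h P). set (dA := diff 1 0 h A).
  set (eP := diff 0 1 k P). set (eA := diff 0 1 k A).
  rewrite (integO_cellwise _ (fun i j s t =>
      bil (dP i j) (dP i j) (dP i (j + 1)%Z) (dP i (j + 1)%Z) s t
      * bil (dA i j) (dA i j) (dA i (j + 1)%Z) (dA i (j + 1)%Z) s t
    + bil (eP i j) (eP (i + 1)%Z j) (eP i j) (eP (i + 1)%Z j) s t
      * bil (eA i j) (eA (i + 1)%Z j) (eA i j) (eA (i + 1)%Z j) s t)).
  - f_equal. unfold eform. rewrite <- gsum_plus. apply gsum_ext. intros i j.
    rewrite simpson2_bil_gradient, !Z.add_0_r. reflexivity.
  - intros i j t. apply quad_plus; apply quad_bil_prod_s.
  - intros i j s. apply quad_plus; apply quad_bil_prod_t.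
  - intros i j x y _ _ Hx Hy.
    rewrite (dX_cell Lx Ly Nx Ny phi HLx HLy HNx HNy Hphi i j), (dX_cell Lx Ly Nx Ny a HLx HLy HNx HNy Ha i j),
      (dY_cell Lx Ly Nx Ny phi HLx HLy HNx HNy Hphi i j), (dY_cell Lx Ly Nx Ny a HLx HLy HNx HNy Ha i j);
      auto; lra.
Qed.

End Integrals.

Theorem lemmaA3 :
  forall (Lx Ly c1 C2 : R), 0 < Lx -> 0 < Ly -> 0 < c1 -> 0 < C2 ->
  exists C : R,
    forall (h : R) (Nx Ny : nat),
      0 < h < 1 -> (0 < Nx)%nat -> (0 < Ny)%nat ->
      c1 * h <= hx Lx Nx <= C2 * h ->
      c1 * h <= hy Ly Ny <= C2 * h ->
      forall phi a : R -> R -> R,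
        in_Uh Lx Ly Nx Ny phi ->
        is_Ah Lx Ly Nx Ny phi a ->
        L2normO Lx Ly a <= C * L2normO Lx Ly (lap_h Lx Ly Nx Ny phi).
Proof.
  intros Lx Ly c1 C2 HLx HLy _ _. exists (sqrt 54).
  intros h Nx Ny _ HNx HNy _ _ phi a Hphi [Ha Hweak].
  assert (Hh := hx_pos Lx Nx HLx HNx). assert (Hk := hy_pos Ly Ny HLy HNy).
  set (P := node Lx Ly Nx Ny phi). set (A := node Lx Ly Nx Ny a).
  assert (IA : integO Lx Ly (fun x y => a x y ^ 2) = hx Lx Nx * hy Ly Ny * gsum Nx Ny (cell_mass A)).
  { apply integO_square; auto. intros i j x y _ _ Hx Hy. apply Uh_cell; auto; lra. }
  assert (IL : integO Lx Ly (fun x y => lap_h Lx Ly Nx Ny phi x y ^ 2) =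
               hx Lx Nx * hy Ly Ny * gsum Nx Ny (cell_mass (grid_lap (hx Lx Nx) (hy Ly Ny) P))).
  { apply integO_square; auto. intros i j x y _ _ Hx Hy. apply lap_cell; auto. }
  assert (Eweak := Hweak a Ha).
  rewrite (integO_ext _ _ _ (fun x y => a x y ^ 2)) in Eweak by (intros; ring).
  rewrite IA, (integO_gradient Lx Ly Nx Ny HLx HLy HNx HNy phi a Hphi Ha) in Eweak.
  apply Rmult_eq_reg_l in Eweak; [|apply Rgt_not_eq, Rmult_lt_0_compat; assumption].
  assert (D := discrete_estimate Nx Ny _ _ P A Hh Hk (node_periodic Lx Ly Nx Ny phi HNx HNy Hphi)
                 (node_periodic Lx Ly Nx Ny a HNx HNy Ha) Eweak).
  unfold L2normO. rewrite IA, IL, <- sqrt_mult_alt by lra.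
  apply sqrt_le_1_alt. assert (0 < hx Lx Nx * hy Ly Ny) by (apply Rmult_lt_0_compat; assumption).
  nra.
Qed.
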